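(* Let $R$ be a schematic semi-graded ring and $J$ a compatible semi-graded ideal of $R$. If $E$ is an LSG $R$-module that is $T$-closed in $\mathsf{LSG}\text{-}R$, then $f^!(E)$ (the largest SG $R$-submodule of $E$ annihilated by $J$, viewed as an $R/J$-module) is an LSG $R/J$-module that is $T$-closed in $\mathsf{LSG}\text{-}R/J$.
   Context: Rings are associative with $1$; modules are left modules. A ring $R$ is semi-graded (SG) if there are additive subgroups $R_n$ ($n\in\mathbb{Z}$) with $R=\bigoplus_n R_n$, $R_mR_n\subseteq\bigoplus_{k\le m+n}R_k$, and $1\in R_0$; positively SG if $R_n=0$ for $n<0$. An $R$-module $M$ is SG if $M=\bigoplus_nM_n$ with $R_mM_n\subseteq\bigoplus_{k\le m+n}M_k$ for $m\ge0$; homomorphisms are homogeneous if they preserve degrees; SG submodules are submodules $N$ with $N=\bigoplus(N\cap M_n)$. An SG ideal $J$ is a two-sided ideal that is an SG submodule of $R$; $R/J$ is SG with $(R/J)_n=(R_n+J)/J$. $f^!(E)$ is an SG $R/J$-module via $\overline r m=rm$, with $f^!(E)_n=f^!(E)\cap E_n$. Let $R'_n=\{r\in R_n: rh\in R_{n+m}\ \forall m,\forall h\in R_m\}$, $R''_n=\{r\in R'_n: hr\in R_{n+m}\ \forall m,\forall h\in R_m\}$, $R'=\bigcup R'_n$, $R''=\bigcup R''_n$, similarly for $R/J$. $M$ is LSG if $R'_nM_m\subseteq M_{n+m}$; $\mathsf{LSG}\text{-}R$ is the category of LSG modules with homogeneous homomorphisms. $J$ is compatible if the image of $R'$ in $R/J$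 is $(R/J)'$. A left Ore set $S$ is good if $S\subseteq R''$ and for $s\in S,r\in R'$ there are $u\in R'$, $v\in S$ with $us=vr$. $R_{\ge t}$ is the intersection of all SG ideals containing $\bigoplus_{k\ge t}R_k$ (likewise $(R/J)_{\ge t}$). $m\in M$ is torsion if $(R_{\ge t})^nm=0$ for some $n,t\ge0$; $M$ is torsion if all its elements are. $R$ is schematic if it is positively SG, left Noetherian, and there is a finite set $I$ of good left Ore sets $S$ with $S\cap\bigoplus_{k\ge1}R_k\ne\emptyset$ such that for each $(x_S)\in\prod_{S\in I}S$ there are $t,m$ with $(R_{\ge t})^m\subseteq\sum_SRx_S$. An object $E$ of $\mathsf{LSG}\text{-}R$ is $T$-closed if for every object $M$, every SG submodule $N$ with $M/N$ torsion, every morphism $N\to E$ extends uniquely to a morphism $M\to E$ (equivalently $E$ is torsion-free and has the extension property); the same definition applies over $R/J$ with $(R/J)_{\ge t}$. *)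

From HB Require Import structures.
From mathcomp Require Import all_boot all_order all_algebra.
From Stdlib Require Import ClassicalEpsilon.
Set Implicit Arguments.
Unset Strict Implicit.
Unset Printing Implicit Defensive.
Import Order.TTheory GRing.Theory Num.Theory.
Local Open Scope ring_scope.

Definition sum_of (V : zmodType) (G : int -> V -> Prop) (P : int -> Prop)
  (v : V) : Prop :=
  exists (s : seq int) (f : int -> V),
    (forall n, n \in s -> P n /\ G n (f n)) /\ v = \sum_(n <- s) f n.

Definition is_dsum (V : zmodType) (D : V -> Prop) (G : int -> V -> Prop) : Prop :=
  [/\ forall n v, G n v -> D v,
      forall n, [/\ G n 0, forall v w, G n v -> G n w -> G n (v + w)
                 & forall v, G n v -> G n (- v)],
      forall v, D v -> sum_of G (fun _ => True) v
    & forall (s : seq int) (f : int -> V), uniq s ->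
        (forall n, n \in s -> G n (f n)) -> \sum_(n <- s) f n = 0 ->
        forall n, n \in s -> f n = 0].

Section Rings.
Variable A : pzRingType.
Variable Ag : int -> A -> Prop.

Definition is_SG_ring : Prop :=
  [/\ is_dsum (fun _ => True) Ag,
      forall m n a b, Ag m a -> Ag n b -> sum_of Ag (fun k => k <= m + n) (a * b)
    & Ag 0 1].

Definition is_pos_SG_ring : Prop :=
  is_SG_ring /\ forall n a, n < 0 -> Ag n a -> a = 0.

Definition primeR (n : int) (a : A) : Prop :=
  Ag n a /\ forall m h, Ag m h -> Ag (n + m) (a * h).
Definition dprimeR (n : int) (a : A) : Prop :=
  primeR n a /\ forall m h, Ag m h -> Ag (n + m) (h * a).
Definition Rp (a : A) : Prop := exists n, primeR n a.
Definition Rpp (a : A) : Prop := exists n, dprimeR n a.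

Definition is_ideal (I : A -> Prop) : Prop :=
  [/\ I 0, forall x y, I x -> I y -> I (x + y), forall x, I x -> I (- x),
      forall a x, I x -> I (a * x) & forall a x, I x -> I (x * a)].

Definition is_left_ideal (I : A -> Prop) : Prop :=
  [/\ I 0, forall x y, I x -> I y -> I (x + y), forall x, I x -> I (- x)
    & forall a x, I x -> I (a * x)].

Definition SG_ideal (I : A -> Prop) : Prop :=
  is_ideal I /\
  forall x, I x -> sum_of (fun n y => Ag n y /\ I y) (fun _ => True) x.

Definition Rge (t : int) (a : A) : Prop :=
  forall I, SG_ideal I -> (forall x, sum_of Ag (fun k => t <= k) x -> I x) -> I a.

Definition prodset (I K : A -> Prop) (a : A) : Prop :=
  exists s : seq (A * A), (forall p, p \in s -> I p.1 /\ K p.2) /\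
    a = \sum_(p <- s) p.1 * p.2.

Fixpoint idpow (I : A -> Prop) (n : nat) : A -> Prop :=
  match n with
  | 0 => fun _ => True
  | n'.+1 => prodset I (idpow I n')
  end.

Definition left_noetherian : Prop :=
  forall I, is_left_ideal I -> exists g : seq A,
    forall a, I a <-> exists c : nat -> A, a = \sum_(i < size g) c i * g`_i.

Definition is_left_ore (S : A -> Prop) : Prop :=
  [/\ S 1, forall a b, S a -> S b -> S (a * b)
    & forall s r, S s -> exists s' r', S s' /\ s' * r = r' * s].

Definition good_ore (S : A -> Prop) : Prop :=
  [/\ is_left_ore S, forall s, S s -> Rpp s
    & forall s r, S s -> Rp r -> exists u v, [/\ Rp u, S v & u * s = v * r]].

Definition schematic : Prop :=
  [/\ is_pos_SG_ring, left_noetherian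
    & exists Ss : seq (A -> Prop),
        (forall i, (i < size Ss)%N ->
           good_ore (nth (fun _ => False) Ss i) /\
           exists s, nth (fun _ => False) Ss i s /\ sum_of Ag (fun k => 1 <= k) s) /\
        forall x : nat -> A, (forall i, (i < size Ss)%N -> nth (fun _ => False) Ss i (x i)) ->
          exists t m : nat, forall a, idpow (Rge t%:Z) m a ->
            exists c : nat -> A, a = \sum_(i < size Ss) c i * x i].
End Rings.

(* Modules presented as a subset of an abelian group with an action    *)
Record lobj (A : pzRingType) := LObj {
  lcar : zmodType;
  ldom : lcar -> Prop;
  lact : A -> lcar -> lcar;
  lgr  : int -> lcar -> Prop }.
Arguments LObj {A}.
Arguments lcar {A}.
Arguments ldom {A} l _.
Arguments lact {A} l _ _.
Arguments lgr {A} l _ _.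

Section Modules.
Unset Implicit Arguments.
Variable A : pzRingType.
Variable Ag : int -> A -> Prop.

Definition is_lmod (X : lobj A) : Prop :=
  [/\ ldom X 0,
      forall x y, ldom X x -> ldom X y -> ldom X (x + y),
      forall x, ldom X x -> ldom X (- x),
      forall a x, ldom X x -> ldom X (lact X a x)
    & [/\ forall a b x, ldom X x -> lact X (a + b) x = lact X a x + lact X b x,
          forall a x y, ldom X x -> ldom X y -> lact X a (x + y) = lact X a x + lact X a y,
          forall a b x, ldom X x -> lact X (a * b) x = lact X a (lact X b x)
        & forall x, ldom X x -> lact X 1 x = x]].

Definition is_SG_mod (X : lobj A) : Prop :=
  [/\ is_lmod X, is_dsum (ldom X) (lgr X)
    & forall m n a x, 0 <= m -> Ag m a -> lgr X n x ->
        sum_of (lgr X) (fun k => k <= m + n) (lact X a x)].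

Definition is_LSG (X : lobj A) : Prop :=
  is_SG_mod X /\
  forall n m a x, primeR Ag n a -> lgr X m x -> lgr X (n + m) (lact X a x).

Definition SG_submod (X : lobj A) (N : lcar X -> Prop) : Prop :=
  [/\ forall x, N x -> ldom X x, N 0,
      forall x y, N x -> N y -> N (x + y) /\ forall x, N x -> N (- x),
      forall a x, N x -> N (lact X a x)
    & forall x, N x -> sum_of (fun n y => lgr X n y /\ N y) (fun _ => True) x].

Definition quot_torsion (X : lobj A) (N : lcar X -> Prop) : Prop :=
  forall x, ldom X x -> exists t n : nat,
    forall a, idpow (Rge Ag t%:Z) n a -> N (lact X a x).

Definition morph (X : lobj A) (N : lcar X -> Prop) (Y : lobj A)
  (g : lcar X -> lcar Y) : Prop :=
  [/\ forall x, N x -> ldom Y (g x),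
      forall x y, N x -> N y -> g (x + y) = g x + g y,
      forall a x, N x -> g (lact X a x) = lact Y a (g x)
    & forall n x, N x -> lgr X n x -> lgr Y n (g x)].

Definition T_closed (E : lobj A) : Prop :=
  forall M : lobj A, (forall x, ldom M x) -> is_LSG M ->
  forall N, SG_submod M N -> quot_torsion M N ->
  forall g, morph M N E g ->
    (exists h, morph M (ldom M) E h /\ forall x, N x -> h x = g x) /\
    (forall h1 h2, morph M (ldom M) E h1 -> morph M (ldom M) E h2 ->
       (forall x, N x -> h1 x = g x) -> (forall x, N x -> h2 x = g x) ->
       forall x, ldom M x -> h1 x = h2 x).
End Modules.
Set Implicit Arguments.
Arguments is_lmod {A} X.
Arguments is_SG_mod {A} Ag X.
Arguments is_LSG {A} Ag X.
Arguments SG_submod {A} X N.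
Arguments quot_torsion {A} Ag X N.
Arguments morph {A} X N Y g.
Arguments T_closed {A} Ag E.

(* Quotient ring R/J (given as a surjection pi : R -> Q with kernel J) *)
(* (R/J)_n = (R_n + J)/J = pi(R_n) *)
Definition quot_gr (R Q : pzRingType) (Rg : int -> R -> Prop)
  (pi : {rmorphism R -> Q}) (n : int) (q : Q) : Prop :=
  exists r, Rg n r /\ pi r = q.

Definition compatible (R Q : pzRingType) (Rg : int -> R -> Prop)
  (pi : {rmorphism R -> Q}) : Prop :=
  forall q, Rp (quot_gr Rg pi) q <-> exists r, Rp Rg r /\ pi r = q.

Definition sec (R Q : pzRingType) (pi : {rmorphism R -> Q}) (q : Q) : R :=
  epsilon (inhabits 0) (fun r => pi r = q).

Definition fshriek_dom (R : pzRingType) (J : R -> Prop) (E : lobj R)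
  (x : lcar E) : Prop :=
  exists N, SG_submod E N /\ (forall j y, J j -> N y -> lact E j y = 0) /\ N x.

Arguments fshriek_dom {R} J E x.

Definition fshriek (R Q : pzRingType) (J : R -> Prop)
  (pi : {rmorphism R -> Q}) (E : lobj R) : lobj Q :=
  LObj (lcar E) (fshriek_dom J E) (fun q x => lact E (sec pi q) x)
       (fun n x => fshriek_dom J E x /\ lgr E n x).

(* The sum of two SG submodules of E killed by J is again one, so f^!(E) is the
   largest such submodule; on it r acts through r + J, which makes it an
   R/J-module.  For the LSG condition, compatibility lifts a in (R/J)'_n to some
   r in R'_(n'); if n' <> n, then r differs by an element of J from a lift in
   R_n, and since J is graded this forces r in J, so r kills f^!(E).
   For T-closedness, restriction of scalars along R -> R/J turns an LSG
   R/J-module into an LSG R-module, and torsion quotients stay torsion because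
   R_(>=t) maps into (R/J)_(>=t) (the preimage of an SG ideal of R/J is an SG
   ideal of R).  A morphism into E extending one into f^!(E) has an image that
   is an SG submodule killed by J, hence lands in f^!(E); uniqueness is
   inherited from E. *)

From mathcomp Require Import all_boot all_order all_algebra.
From Stdlib Require Import ClassicalEpsilon.
Set Implicit Arguments. Unset Strict Implicit. Unset Printing Implicit Defensive.
Import GRing.Theory.
Local Open Scope ring_scope.

Section DirectSum.
Variable V : zmodType.
Implicit Types (D I : V -> Prop) (G : int -> V -> Prop) (s t : seq int) (f : int -> V).

Definition graded G I : Prop :=
  forall x, I x -> sum_of (fun n y => G n y /\ I y) (fun _ => True) x.

(* The degree-[k] part of [\sum_(n <- s) f n]; [s] may contain repetitions. *)
Definition component s f k : V := f k *+ count_mem k s.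

Lemma big_component s t f : uniq t -> {subset s <= t} ->
  \sum_(n <- s) f n = \sum_(n <- t) component s f n.
Proof.
move=> Ut; elim: s => [|x s IH] Sst.
  by rewrite big_nil big1 // => k _; rewrite /component mulr0n.
rewrite big_cons IH; last by move=> y ys; apply: Sst; rewrite inE ys orbT.
rewrite /component /=; under [RHS]eq_bigr => k _ do rewrite mulrnDr.
rewrite big_split /=; congr (_ + _).
rewrite (bigD1_seq x) ?Sst ?mem_head //= eqxx mulr1n big1 ?addr0 //.
by move=> i; rewrite eq_sym => /negbTE ->.
Qed.

Lemma component_closed (P : V -> Prop) s f k :
  P 0 -> (forall v w, P v -> P w -> P (v + w)) -> (k \in s -> P (f k)) ->
  P (component s f k).
Proof.
move=> P0 PD Pk; rewrite /component.
have [ks|/count_memPn ->] := boolP (k \in s); last by rewrite mulr0n.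
by elim: (count_mem k s) => [|c IH]; rewrite ?mulr0n // mulrS; apply: PD => //; apply: Pk.
Qed.

Lemma dsum_component_eq D G s1 f1 s2 f2 : is_dsum D G ->
  (forall n, n \in s1 -> G n (f1 n)) -> (forall n, n \in s2 -> G n (f2 n)) ->
  \sum_(n <- s1) f1 n = \sum_(n <- s2) f2 n ->
  forall k, component s1 f1 k = component s2 f2 k.
Proof.
case=> _ Gcl _ Gind G1 G2 Esum k.
pose t := undup (s1 ++ s2).
have S1 : {subset s1 <= t} by move=> y ys; rewrite mem_undup mem_cat ys.
have S2 : {subset s2 <= t} by move=> y ys; rewrite mem_undup mem_cat ys orbT.
have [kt|kt] := boolP (k \in t); last first.
  by rewrite /component !(count_memPn _) //; apply: contra kt; [apply: S2|apply: S1].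
apply/eqP; rewrite -subr_eq0; apply/eqP.
apply: (Gind t (fun k => component s1 f1 k - component s2 f2 k)) => //.
- exact: undup_uniq.
- move=> n _; have [G0 GD GN] := Gcl n.
  by apply: (GD); [|apply: GN]; apply: component_closed => //; [apply: G1|apply: G2].
- by rewrite sumrB -!big_component ?undup_uniq // Esum subrr.
Qed.

Lemma graded_component D G I s f : is_dsum D G -> graded G I ->
  I 0 -> (forall v w, I v -> I w -> I (v + w)) ->
  (forall n, n \in s -> G n (f n)) -> I (\sum_(n <- s) f n) ->
  forall k, I (component s f k).
Proof.
move=> Gdsum Igr I0 ID Gf /Igr [s' [f' [Gf' Esum]]] k.
rewrite (dsum_component_eq Gdsum Gf _ Esum); last by move=> n /Gf' [_ []].
by apply: component_closed => // /Gf' [_ []].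
Qed.

Lemma sum_of_components G (P : int -> Prop) s f :
  (forall k, k \in s -> P k /\ G k (component s f k)) -> sum_of G P (\sum_(n <- s) f n).
Proof.
move=> PG; exists (undup s), (component s f); split.
  by move=> k; rewrite mem_undup; apply: PG.
by apply: big_component (undup_uniq s) _ => k; rewrite mem_undup.
Qed.

Lemma sum_of_mono G G' (P P' : int -> Prop) v :
  (forall n w, P n -> G n w -> P' n /\ G' n w) -> sum_of G P v -> sum_of G' P' v.
Proof.
move=> GG' [s [f [Gf ->]]]; exists s, f; split => // n ns.
by have [Pn Gn] := Gf n ns; apply: GG'.
Qed.

Lemma sum_of_add G (P : int -> Prop) v w :
  (forall n, G n 0) -> (forall n v w, G n v -> G n w -> G n (v + w)) ->
  sum_of G P v -> sum_of G P w -> sum_of G P (v + w).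
Proof.
move=> G0 GD [s1 [f1 [Gf1 ->]]] [s2 [f2 [Gf2 ->]]].
pose t := undup (s1 ++ s2).
have S1 : {subset s1 <= t} by move=> y ys; rewrite mem_undup mem_cat ys.
have S2 : {subset s2 <= t} by move=> y ys; rewrite mem_undup mem_cat ys orbT.
exists t, (fun k => component s1 f1 k + component s2 f2 k); split; last first.
  by rewrite big_split /= -!big_component ?undup_uniq.
move=> k; rewrite mem_undup mem_cat => kst; split.
  by case/orP: kst => [/Gf1|/Gf2] [].
by apply: (GD); apply: (component_closed (G0 k) (GD k)); [case/Gf1|case/Gf2].
Qed.

Lemma sum_of_graded D G I (P : int -> Prop) v : is_dsum D G -> graded G I ->
  I 0 -> (forall v w, I v -> I w -> I (v + w)) ->
  I v -> sum_of G P v -> sum_of (fun n y => G n y /\ I y) P v.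
Proof.
move=> Gdsum Igr I0 ID Iv [s [f [Gf Ev]]]; rewrite Ev in Iv *.
have Gf' : forall n, n \in s -> G n (f n) by move=> n /Gf [].
apply: sum_of_components => k ks; split; first by have [] := Gf k ks.
have [_ Gcl _ _] := Gdsum; have [G0 GD _] := Gcl k.
split; first exact: (component_closed G0 GD (Gf' k)).
exact: graded_component Gdsum Igr I0 ID Gf' Iv k.
Qed.
End DirectSum.

Section QuotientRing.
Variables (R Q : pzRingType) (Rg : int -> R -> Prop) (J : R -> Prop).
Variable pi : {rmorphism R -> Q}.
Hypothesis Rdsum : is_dsum (fun _ => True) Rg.
Hypothesis J_SG : SG_ideal Rg J.
Hypothesis pi_surj : forall q, exists r, pi r = q.
Hypothesis ker_pi : forall r, pi r = 0 <-> J r.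

Local Notation Qg := (quot_gr Rg pi).

Lemma SG_ideal_homog n n' r0 r :
  Rg n r0 -> Rg n' r -> n != n' -> J (r - r0) -> J r.
Proof.
move=> Rr0 Rr nn' Jd; have [[J0 JD _ _ _] Jgr] := J_SG.
have [_ Rcl _ _] := Rdsum; have [_ _ RN] := Rcl n.
pose f k := if k == n' then r else - r0.
have Rf : forall k, k \in [:: n'; n] -> Rg k (f k).
  by move=> k; rewrite !inE /f => /orP [] /eqP ->; rewrite ?eqxx ?(negbTE nn') //; apply: RN.
have := graded_component Rdsum Jgr J0 JD Rf _ n'.
rewrite /component /f /= eqxx (negbTE nn') /= mulr1n; apply.
by rewrite big_cons big_seq1 /f eqxx (negbTE nn').
Qed.

Lemma rmorph_sum_of (P : int -> Prop) x : sum_of Rg P x -> sum_of Qg P (pi x).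
Proof.
move=> [s [f [Rf ->]]]; exists s, (fun k => pi (f k)); split; last by rewrite rmorph_sum.
by move=> n /Rf [Pn Rfn]; split => //; exists (f n).
Qed.

Lemma quot_gr_dsum : is_dsum (fun _ => True) Qg.
Proof.
have [_ Rcl Rdec _] := Rdsum; have [[J0 JD _ _ _] Jgr] := J_SG.
split => //.
- move=> n; have [R0 RD RN] := Rcl n; split.
  + by exists 0; rewrite rmorph0.
  + move=> _ _ [r [Rr <-]] [r' [Rr' <-]].
    by exists (r + r'); rewrite rmorphD; split => //; apply: RD.
  + by move=> _ [r [Rr <-]]; exists (- r); rewrite rmorphN; split => //; apply: RN.
- by move=> q _; have [r <-] := pi_surj q; apply: rmorph_sum_of; apply: Rdec.
- move=> s fq Us Qf fq0 n ns.
  pose fr k := epsilon (inhabits 0) (fun r => Rg k r /\ pi r = fq k).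
  have Rfr k : k \in s -> Rg k (fr k) /\ pi (fr k) = fq k.
    move/Qf => [r Hr].
    exact: (epsilon_spec _ _ (ex_intro (fun r => Rg k r /\ pi r = fq k) r Hr)).
  have Jsum : J (\sum_(k <- s) fr k).
    by apply/ker_pi; rewrite rmorph_sum -[RHS]fq0; apply: eq_big_seq => k /Rfr [].
  have := graded_component Rdsum Jgr J0 JD (fun k ks => proj1 (Rfr k ks)) Jsum n.
  rewrite /component count_uniq_mem // ns mulr1n => /ker_pi.
  by have [_ ->] := Rfr n ns.
Qed.

Lemma preim_SG_ideal (I : Q -> Prop) :
  SG_ideal Qg I -> SG_ideal Rg (fun r => I (pi r)).
Proof.
move=> [[I0 ID IN IL IR] Igr]; have [_ Rcl Rdec _] := Rdsum.
split; first split.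
- by rewrite rmorph0.
- by move=> x y Ix Iy; rewrite rmorphD; apply: ID.
- by move=> x Ix; rewrite rmorphN; apply: IN.
- by move=> a x Ix; rewrite rmorphM; apply: IL.
- by move=> a x Ix; rewrite rmorphM; apply: IR.
move=> x Ix; have [s [f [Rf Ex]]] := Rdec x Logic.I.
have Rf' : forall k, k \in s -> Rg k (f k) by move=> k /Rf [].
have Qf : forall k, k \in s -> Qg k (pi (f k)) by move=> k /Rf' Rfk; exists (f k).
have Isum : I (\sum_(k <- s) pi (f k)) by rewrite -rmorph_sum -Ex.
rewrite Ex; apply: sum_of_components => k ks; split => //; split.
- by have [R0 RD _] := Rcl k; apply: (component_closed R0 RD (Rf' k)).
- rewrite /component rmorphMn.
  exact: (graded_component quot_gr_dsum Igr I0 ID Qf Isum k).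
Qed.

Lemma rmorph_Rge t a : Rge Rg t a -> Rge Qg t (pi a).
Proof.
move=> Ra I ISG Iget; apply: (Ra (fun r => I (pi r))); first exact: preim_SG_ideal.
by move=> x /rmorph_sum_of; apply: Iget.
Qed.

Lemma rmorph_idpow t n a : idpow (Rge Rg t) n a -> idpow (Rge Qg t) n (pi a).
Proof.
elim: n a => [|n IH] a //= [s [Rs ->]].
exists (map (fun p => (pi p.1, pi p.2)) s); split.
  move=> _ /mapP [p ps ->] /=; have [R1 R2] := Rs p ps.
  by split; [apply: rmorph_Rge | apply: IH].
by rewrite rmorph_sum big_map; apply: eq_bigr => p _; rewrite rmorphM.
Qed.
End QuotientRing.

Definition annihilates (A : pzRingType) (J : A -> Prop) (X : lobj A)
    (N : lcar X -> Prop) : Prop :=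
  forall j y, J j -> N y -> lact X j y = 0.
Arguments annihilates {A} J X N.

Section Modules.
Variable A : pzRingType.
Implicit Types (X : lobj A) (J : A -> Prop).

Lemma lact0r X x : is_lmod X -> ldom X x -> lact X 0 x = 0.
Proof.
case=> _ _ _ _ [actDl _ _ _] Xx.
by apply: (@addrI _ (lact X 0 x)); rewrite -actDl // !addr0.
Qed.

Lemma lactr0 X a : is_lmod X -> lact X a 0 = 0.
Proof.
case=> X0 _ _ _ [_ actDr _ _].
by apply: (@addrI _ (lact X a 0)); rewrite -actDr // !addr0.
Qed.

Lemma SG_submodD X N x y : SG_submod X N -> N x -> N y -> N (x + y).
Proof. by case=> _ _ ND _ _ Nx Ny; have [] := ND x y Nx Ny. Qed.

Lemma SG_submodN X N x : SG_submod X N -> N x -> N (- x).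
Proof. by case=> _ _ ND _ _ Nx; have [_] := ND x x Nx Nx; apply. Qed.

Definition addset X (N1 N2 : lcar X -> Prop) (z : lcar X) : Prop :=
  exists a b, [/\ N1 a, N2 b & z = a + b].

Lemma SG_submod_addset X N1 N2 : is_lmod X -> is_dsum (ldom X) (lgr X) ->
  SG_submod X N1 -> SG_submod X N2 -> SG_submod X (addset N1 N2).
Proof.
move=> [_ XD _ _ [_ actDr _ _]] [_ Xcl _ _] N1sub N2sub.
have [N1X N10 _ N1act N1gr] := N1sub; have [N2X N20 _ N2act N2gr] := N2sub.
have addsetD z w : addset N1 N2 z -> addset N1 N2 w -> addset N1 N2 (z + w).
  move=> [a [b [N1a N2b ->]]] [a' [b' [N1a' N2b' ->]]].
  by exists (a + a'), (b + b'); rewrite addrACA; split => //; apply: SG_submodD.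
have addsetl a : N1 a -> addset N1 N2 a by exists a, 0; rewrite addr0.
have addsetr b : N2 b -> addset N1 N2 b by exists 0, b; rewrite add0r.
split.
- by move=> _ [a [b [N1a N2b ->]]]; apply: XD; [apply: N1X|apply: N2X].
- exact: addsetl.
- move=> z w Nz Nw; split; first exact: addsetD.
  move=> _ [a [b [N1a N2b ->]]].
  by exists (- a), (- b); rewrite opprD; split => //; apply: SG_submodN.
- move=> r _ [a [b [N1a N2b ->]]].
  exists (lact X r a), (lact X r b); rewrite actDr; [split; auto|exact: N1X|exact: N2X].
- move=> _ [a [b [N1a N2b ->]]]; apply: sum_of_add.
  + by move=> n; split; [have [] := Xcl n | exact: addsetl].
  + move=> n v w [Gv Nv] [Gw Nw]; split; last exact: addsetD.
    by have [_ XGD _] := Xcl n; apply: XGD.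
  + by apply: sum_of_mono (N1gr a N1a) => n y _ [Gy Ny]; split => //; split => //; apply: addsetl.
  + by apply: sum_of_mono (N2gr b N2b) => n y _ [Gy Ny]; split => //; split => //; apply: addsetr.
Qed.

Lemma annihilates_addset J X N1 N2 : is_lmod X ->
  SG_submod X N1 -> SG_submod X N2 ->
  annihilates J X N1 -> annihilates J X N2 -> annihilates J X (addset N1 N2).
Proof.
move=> [_ _ _ _ [_ actDr _ _]] [N1X _ _ _ _] [N2X _ _ _ _] AN1 AN2.
move=> j _ Jj [a [b [N1a N2b ->]]].
by rewrite actDr ?(AN1 j a) ?(AN2 j b) ?addr0 //; [apply: N1X | apply: N2X].
Qed.

Section Morphisms.
Variables (X Y : lobj A) (h : lcar X -> lcar Y).
Hypothesis X_lmod : is_lmod X.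
Hypothesis h_morph : morph X (ldom X) Y h.

Lemma morph0 : h 0 = 0.
Proof.
have [X0 _ _ _ _] := X_lmod; have [_ hD _ _] := h_morph.
by apply: (@addrI _ (h 0)); rewrite -hD // !addr0.
Qed.

Lemma morphN x : ldom X x -> h (- x) = - h x.
Proof.
have [_ _ XN _ _] := X_lmod; have [_ hD _ _] := h_morph.
by move=> Xx; apply: (@addrI _ (h x)); rewrite -hD ?subrr ?morph0 //; apply: XN.
Qed.

Lemma morph_sum s (f : int -> lcar X) : (forall n, n \in s -> ldom X (f n)) ->
  h (\sum_(n <- s) f n) = \sum_(n <- s) h (f n).
Proof.
have [X0 XD _ _ _] := X_lmod; have [_ hD _ _] := h_morph.
elim: s => [|k s IH] Xf; first by rewrite !big_nil morph0.
have Xs : forall n, n \in s -> ldom X (f n) by move=> n ns; apply: Xf; rewrite inE ns orbT.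
rewrite !big_cons hD ?IH //; first by apply: Xf; rewrite mem_head.
by rewrite big_seq; apply: (big_ind (ldom X)) => // n /Xs.
Qed.

Lemma morph_image_SG_submod : is_dsum (ldom X) (lgr X) ->
  SG_submod Y (fun y => exists2 x, ldom X x & y = h x).
Proof.
move=> [XG _ Xdec _]; have [X0 XD XN Xact _] := X_lmod.
have [hY hD hact hgr] := h_morph.
split.
- by move=> _ [x Xx ->]; apply: hY.
- by exists 0; last rewrite morph0.
- move=> _ _ [x Xx ->] [x' Xx' ->]; split; first by exists (x + x'); [apply: XD|rewrite hD].
  by move=> _ [x'' Xx'' ->]; exists (- x''); [apply: XN|rewrite morphN].
- by move=> a _ [x Xx ->]; exists (lact X a x); [apply: Xact|rewrite hact].
- move=> _ [x Xx ->]; have [s [f [Gf ->]]] := Xdec x Xx.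
  have Xf : forall n, n \in s -> ldom X (f n) by move=> n /Gf [_ /XG].
  rewrite morph_sum //; exists s, (fun n => h (f n)); split => // n ns.
  have [_ Gfn] := Gf n ns; split => //; split; first exact: hgr (Xf n ns) Gfn.
  by exists (f n); first exact: Xf.
Qed.
End Morphisms.
End Modules.

Section Restriction.
Variables (R Q : pzRingType) (Rg : int -> R -> Prop) (pi : {rmorphism R -> Q}).

Definition restrict (M : lobj Q) : lobj R :=
  LObj (lcar M) (ldom M) (fun r x => lact M (pi r) x) (lgr M).

Lemma restrict_lmod M : is_lmod M -> is_lmod (restrict M).
Proof.
move=> [M0 MD MN Mact [actDl actDr actM act1]]; split => //=.
- by move=> a x Mx; apply: Mact.
- split => /= [a b x Mx|a x y Mx My|a b x Mx|x Mx].
  + by rewrite rmorphD actDl.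
  + by rewrite actDr.
  + by rewrite rmorphM actM.
  + by rewrite rmorph1 act1.
Qed.

Lemma restrict_LSG M : is_LSG (quot_gr Rg pi) M -> is_LSG Rg (restrict M).
Proof.
move=> [[M_lmod M_dsum M_SG] M_L]; split; first split => //.
- exact: restrict_lmod.
- by move=> m n a x m0 Ra Gx; apply: M_SG => //; exists a.
- move=> n m a x [Ra Ra'] Gx; apply: M_L => //; split; first by exists a.
  by move=> k _ [h [Rh <-]]; exists (a * h); rewrite rmorphM; split => //; apply: Ra'.
Qed.

Lemma restrict_SG_submod M N : SG_submod M N -> SG_submod (restrict M) N.
Proof. by case=> NM N0 ND Nact Ngr; split => // a x; apply: Nact. Qed.

Lemma restrict_quot_torsion J M N :
  is_dsum (fun _ => True) Rg -> SG_ideal Rg J ->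
  (forall q, exists r, pi r = q) -> (forall r, pi r = 0 <-> J r) ->
  quot_torsion (quot_gr Rg pi) M N -> quot_torsion Rg (restrict M) N.
Proof.
move=> Rdsum J_SG pi_surj ker_pi M_tors x Mx; have [t [n Ht]] := M_tors x Mx.
by exists t, n => a /(rmorph_idpow Rdsum J_SG pi_surj ker_pi) /Ht.
Qed.
End Restriction.

Section Fshriek.
Variables (R Q : pzRingType) (J : R -> Prop) (pi : {rmorphism R -> Q}) (E : lobj R).
Hypothesis pi_surj : forall q, exists r, pi r = q.
Hypothesis ker_pi : forall r, pi r = 0 <-> J r.
Hypothesis E_lmod : is_lmod E.
Hypothesis E_dsum : is_dsum (ldom E) (lgr E).

Local Notation D := (fshriek_dom J E).
Local Notation F := (fshriek J pi E).

Lemma fshriek_dom_sub x : D x -> ldom E x.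
Proof. by case=> N [[NE _ _ _ _] [_ Nx]]; apply: NE. Qed.

Lemma fshriek_annihilated : annihilates J E D.
Proof. by move=> j y Jj [N [_ [AN Ny]]]; apply: AN. Qed.

Lemma fshriek_domD x y : D x -> D y -> D (x + y).
Proof.
move=> [N1 [N1sub [AN1 N1x]]] [N2 [N2sub [AN2 N2y]]].
exists (addset N1 N2); split; first exact: SG_submod_addset.
by split; [exact: annihilates_addset | exists x, y].
Qed.

Lemma fshriek_SG_submod : SG_submod E D.
Proof.
have [E0 _ _ _ _] := E_lmod.
split.
- exact: fshriek_dom_sub.
- exists (fun x => x = 0); split; last by split => // j _ _ ->; apply: lactr0.
  split => //; first by move=> _ ->.
  + by move=> _ _ -> ->; rewrite addr0; split => // _ ->; rewrite oppr0.
  + by move=> a _ ->; apply: lactr0.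
  + by move=> _ ->; exists [::], (fun _ => 0); rewrite big_nil.
- move=> x y Dx Dy; split; first exact: fshriek_domD.
  by move=> z [N [Nsub [AN Nz]]]; exists N; split => //; split => //; apply: SG_submodN Nsub Nz.
- move=> a x [N [Nsub [AN Nx]]]; exists N; split => //; split => //.
  by case: Nsub => _ _ _ + _; apply.
- move=> x [N [Nsub [AN Nx]]]; have [_ _ _ _ Ngr] := Nsub.
  by apply: sum_of_mono (Ngr x Nx) => n y _ [Gy Ny]; split => //; split => //; exists N.
Qed.

Lemma lact_congr_pi x r1 r2 : D x -> pi r1 = pi r2 -> lact E r1 x = lact E r2 x.
Proof.
move=> Dx E12; have J12 : J (r1 - r2) by apply/ker_pi; rewrite rmorphB E12 subrr.
have [_ _ _ _ [actDl _ _ _]] := E_lmod.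
rewrite -[r1](subrK r2) actDl ?(fshriek_annihilated J12 Dx) ?add0r //.
exact: fshriek_dom_sub.
Qed.

Lemma lact_fshriek r x : D x -> lact F (pi r) x = lact E r x.
Proof.
move=> Dx; apply: lact_congr_pi => //=.
by rewrite /sec; apply: (epsilon_spec _ (fun r' => pi r' = pi r)); exists r.
Qed.

Lemma fshriek_lmod : is_lmod F.
Proof.
have [_ SD0 SDD SDact _] := fshriek_SG_submod.
have [_ _ _ _ [actDl actDr actM act1]] := E_lmod.
split => //.
- by move=> x y Dx Dy; have [] := SDD x y Dx Dy.
- by move=> x Dx; have [_] := SDD x x Dx Dx; apply.
- by move=> a x Dx; apply: SDact.
split.
- move=> a b x Dx; have [r <-] := pi_surj a; have [s <-] := pi_surj b.
  by rewrite -rmorphD !lact_fshriek // actDl //; apply: fshriek_dom_sub.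
- move=> a x y Dx Dy; have [r <-] := pi_surj a.
  rewrite !lact_fshriek ?actDr //; try exact: fshriek_dom_sub.
  by have [] := SDD x y Dx Dy.
- move=> a b x Dx; have [r <-] := pi_surj a; have [s <-] := pi_surj b.
  by rewrite -rmorphM !lact_fshriek ?actM //; [apply: fshriek_dom_sub | apply: SDact].
- by move=> x Dx; rewrite -(rmorph1 pi) lact_fshriek ?act1 //; apply: fshriek_dom_sub.
Qed.

Lemma fshriek_dsum : is_dsum (ldom F) (lgr F).
Proof.
have [_ SD0 SDD _ SDgr] := fshriek_SG_submod.
have [_ Ecl _ Eind] := E_dsum.
split => /=.
- by move=> n v [].
- move=> n; have [E0 ED EN] := Ecl n; split => //.
  + by move=> v w [Dv Gv] [Dw Gw]; split; [apply: fshriek_domD | apply: ED].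
  + by move=> v [Dv Gv]; split; [have [_] := SDD v v Dv Dv; apply | apply: EN].
- by move=> v /SDgr; apply: sum_of_mono => n w _ [Gw Dw].
- by move=> s f Us Gf; apply: Eind => // n /Gf [].
Qed.

Lemma fshriek_LSG Rg : is_dsum (fun _ => True) Rg -> SG_ideal Rg J ->
  compatible Rg pi -> is_LSG Rg E -> is_LSG (quot_gr Rg pi) F.
Proof.
move=> Rdsum J_SG compat [[_ _ E_SG] E_L].
have [_ SD0 SDD SDact SDgr] := fshriek_SG_submod.
have [_ Ecl _ _] := E_dsum.
split; first split.
- exact: fshriek_lmod.
- exact: fshriek_dsum.
- move=> m n _ x m0 [r [Rr <-]] [Dx Gx]; rewrite lact_fshriek //.
  have DD v w : D v -> D w -> D (v + w) by move=> Dv Dw; have [] := SDD v w Dv Dw.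
  have := sum_of_graded E_dsum SDgr SD0 DD (SDact r x Dx) (E_SG m n r x m0 Rr Gx).
  by apply: sum_of_mono => k y ? [].
- move=> n m a x Qa [Dx Gx]; split; first exact: SDact.
  have [[r0 [Rr0 pir0]] _] := Qa.
  have [r [[n' Rr] pir]] := (compat a).1 (ex_intro _ n Qa).
  rewrite -pir lact_fshriek //.
  have [->|nn'] := eqVneq n n'; first exact: E_L.
  have Jr : J r.
    apply: (SG_ideal_homog Rdsum J_SG Rr0 Rr.1 nn'); apply/ker_pi.
    by rewrite rmorphB pir pir0 subrr.
  by rewrite (fshriek_annihilated Jr Dx); have [] := Ecl (n + m).
Qed.

Lemma morph_fshriekP (M : lobj Q) P h :
  morph M P F h <-> morph (restrict pi M) P E h /\ (forall x, P x -> D (h x)).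
Proof.
split.
- move=> [hD hadd hact hgr]; split => //; split => //.
  + by move=> x /hD; apply: fshriek_dom_sub.
  + by move=> a x Px /=; rewrite hact // lact_fshriek //; apply: hD.
  + by move=> n x Px /(hgr n x Px) [].
- move=> [[_ hadd hact hgr] hD]; split => //.
  + move=> a x Px; have [r <-] := pi_surj a.
    by rewrite lact_fshriek; [exact: (hact r x Px) | apply: hD].
  + by move=> n x Px Gx; split; [apply: hD | apply: hgr].
Qed.

Lemma fshriek_dom_morph (M : lobj Q) h : is_lmod M -> is_dsum (ldom M) (lgr M) ->
  morph (restrict pi M) (ldom M) E h -> forall x, ldom M x -> D (h x).
Proof.
move=> M_lmod M_dsum h_morph x Mx.
have rM_lmod := restrict_lmod pi M_lmod.
exists (fun y => exists2 x, ldom M x & y = h x); split.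
  exact: (morph_image_SG_submod rM_lmod h_morph M_dsum).
split; last by exists x.
move=> j _ Jj [x' Mx' ->]; have [_ _ hact _] := h_morph.
rewrite -hact //=; have -> : pi j = 0 by apply/ker_pi.
by rewrite lact0r // (morph0 rM_lmod h_morph).
Qed.

Lemma fshriek_T_closed Rg : is_dsum (fun _ => True) Rg -> SG_ideal Rg J ->
  T_closed Rg E -> T_closed (quot_gr Rg pi) F.
Proof.
move=> Rdsum J_SG E_T M Mall M_LSG N N_sub N_tors g /morph_fshriekP [g_morph _].
have [[M_lmod M_dsum _] _] := M_LSG.
have rN_tors := restrict_quot_torsion Rdsum J_SG pi_surj ker_pi N_tors.
have [[h [h_morph h_ext]] h_uniq] := E_T (restrict pi M) Mall (restrict_LSG M_LSG) N
  (restrict_SG_submod pi N_sub) rN_tors g g_morph.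
split.
- exists h; split => //; apply/morph_fshriekP; split => //.
  exact: fshriek_dom_morph.
- by move=> h1 h2 /morph_fshriekP [h1_morph _] /morph_fshriekP [h2_morph _]; apply: h_uniq.
Qed.
End Fshriek.

Theorem mainTheorem10 (R Q : pzRingType) (Rg : int -> R -> Prop) (J : R -> Prop)
  (pi : {rmorphism R -> Q}) :
  schematic Rg ->
  SG_ideal Rg J ->
  (forall q : Q, exists r : R, pi r = q) ->
  (forall r : R, pi r = 0 <-> J r) ->
  compatible Rg pi ->
  forall E : lobj R, (forall x, ldom E x) -> is_LSG Rg E -> T_closed Rg E ->
  is_LSG (quot_gr Rg pi) (fshriek J pi E) /\ T_closed (quot_gr Rg pi) (fshriek J pi E).
Proof.
move=> [[[Rdsum _ _] _] _ _] J_SG pi_surj ker_pi compat E _ E_LSG E_T.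
have [[E_lmod E_dsum _] _] := E_LSG.
split; first exact: fshriek_LSG.
exact: fshriek_T_closed.
Qed.
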